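(* Let $L(x)\in\mathbb{F}_{p^r}[x]$ be an additive polynomial and $A(x)\in\mathbb{F}_{p^r}[x]$. The following are equivalent: (i) $A(L(x))$ is an Alltop polynomial; (ii) $L(A(x))$ is an Alltop polynomial; (iii) $A(x)$ is an Alltop polynomial and $L(x)$ is a permutation polynomial of $\mathbb{F}_{p^r}$.
   Context: For $f:\mathbb{F}_{p^r}\to\mathbb{F}_{p^r}$ and $a\in\mathbb{F}_{p^r}$, $\Delta_{f,a}(x)=f(x+a)-f(x)$. A function $f$ is planar if for every $a\in\mathbb{F}_{p^r}^*$ the map $x\mapsto\Delta_{f,a}(x)$ is a bijection. A polynomial $A$ is an Alltop polynomial (function) if $\Delta_{A,a}$ is planar for every $a\in\mathbb{F}_{p^r}^*$. A polynomial $L$ is additive if $L(x+y)=L(x)+L(y)$ for all $x,y\in\mathbb{F}_{p^r}$. A permutation polynomial is one inducing a bijection of $\mathbb{F}_{p^r}$. *)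

From HB Require Import structures.
From mathcomp Require Import all_boot all_order all_algebra all_field.
Set Implicit Arguments. Unset Strict Implicit. Unset Printing Implicit Defensive.
Import GRing.Theory.
Local Open Scope ring_scope.

Section AlltopDefs.
Variable F : finFieldType.

Definition delta (f : F -> F) (a : F) : F -> F := fun x => f (x + a) - f x.

Definition planar (f : F -> F) : Prop :=
  forall a : F, a != 0 -> bijective (delta f a).

Definition alltop_fun (f : F -> F) : Prop :=
  forall a : F, a != 0 -> planar (delta f a).

Definition alltop_poly (A : {poly F}) : Prop := alltop_fun (fun x => A.[x]).

Definition additive_poly (L : {poly F}) : Prop :=
  forall x y : F, L.[x + y] = L.[x] + L.[y].

Definition permutation_poly (L : {poly F}) : Prop :=
  bijective (fun x : F => L.[x]).

End AlltopDefs.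

From HB Require Import structures.
From mathcomp Require Import all_boot all_order all_algebra all_field.
Set Implicit Arguments. Unset Strict Implicit. Unset Printing Implicit Defensive.
Import GRing.Theory.
Local Open Scope ring_scope.

(* Second differences commute with an additive map [l]: those of [l \o f] are
   [l \o delta (delta f a) b] and those of [f \o l] are
   [delta (delta f (l a)) (l b) \o l].  So bijectivity of second differences passes
   between [f] and the composite when [l] is bijective; conversely one bijective
   second difference of the composite forces [l] to be onto (resp. injective),
   hence bijective on the finite field. *)

Lemma bij_of_bij_compl (T : Type) (f l : T -> T) :
  bijective (l \o f) -> bijective l -> bijective f.
Proof.
move=> blf [li lK liK]; apply: (eq_bij (bij_comp (Bijective liK lK) blf)).
by move=> x /=; rewrite lK.
Qed.

Lemma bij_of_bij_compr (T : Type) (f l : T -> T) :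
  bijective (f \o l) -> bijective l -> bijective f.
Proof.
move=> bfl [li lK liK]; apply: (eq_bij (bij_comp bfl (Bijective liK lK))).
by move=> x /=; rewrite liK.
Qed.

Lemma bij_compl_bij (T : finType) (f l : T -> T) :
  bijective (l \o f) -> bijective l.
Proof.
case=> g lfK glfK; have bfg : bijective (f \o g).
  by apply: injF_bij => x y /= exy; rewrite -[x]glfK -[y]glfK /= exy.
by apply: (bij_can_bij bfg) => x; apply: glfK.
Qed.

Lemma bij_compr_bij (T : finType) (f l : T -> T) :
  bijective (f \o l) -> bijective l.
Proof. by case=> g flK _; apply: injF_bij => x y exy; rewrite -[x]flK -[y]flK /= exy. Qed.

Section Alltop.
Variable F : finFieldType.
Implicit Types (f g : F -> F) (a b : F).

Lemma eq_delta f g a : f =1 g -> delta f a =1 delta g a.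
Proof. by move=> fg x; rewrite /delta !fg. Qed.

Lemma eq_alltop f g : f =1 g -> alltop_fun f <-> alltop_fun g.
Proof.
move=> fg; suff imp f1 f2 : f1 =1 f2 -> alltop_fun f1 -> alltop_fun f2.
  by split; apply: imp.
move=> f12 Af1 a a0 b b0; apply: (eq_bij (Af1 a a0 b b0)).
by apply/eq_delta/eq_delta.
Qed.

Lemma alltop_delta2P f :
  alltop_fun f <-> forall a b, a != 0 -> b != 0 -> bijective (delta (delta f a) b).
Proof. by split=> Af a ? ? ? *; [apply: Af | apply: Af]. Qed.

Variable l : F -> F.
Hypothesis lD : {morph l : x y / x + y}.

Let l0 : l 0 = 0.
Proof. by apply: (addrI (l 0)); rewrite -lD !addr0. Qed.

Let lB x y : l (x - y) = l x - l y.
Proof.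
have lN z : l (- z) = - l z by apply: (addrI (l z)); rewrite -lD !subrr l0.
by rewrite lD lN.
Qed.

Lemma delta2_addl f a b : delta (delta (l \o f) a) b =1 l \o delta (delta f a) b.
Proof. by move=> x; rewrite /delta /= !lB. Qed.

Lemma delta2_addr f a b :
  delta (delta (f \o l) a) b =1 delta (delta f (l a)) (l b) \o l.
Proof. by move=> x; rewrite /delta /= !lD. Qed.

Lemma bij_add_neq0 a : bijective l -> (l a != 0) = (a != 0).
Proof.
case=> li lK _; have [->|a0] := eqVneq a 0; first by rewrite l0 eqxx.
by apply: contra_neq a0 => la0; rewrite -[a]lK la0 -{1}l0 lK.
Qed.

Lemma alltop_addl f : alltop_fun (l \o f) <-> alltop_fun f /\ bijective l.
Proof.
split=> [/alltop_delta2P Alf | [/alltop_delta2P Af bl]]; last first.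
  apply/alltop_delta2P => a b a0 b0; apply: (eq_bij (bij_comp bl (Af a b a0 b0))).
  by move=> x; rewrite delta2_addl.
have d2_bij a b : a != 0 -> b != 0 -> bijective (l \o delta (delta f a) b).
  by move=> a0 b0; apply: (eq_bij (Alf a b a0 b0)); apply: delta2_addl.
have bl : bijective l by apply: bij_compl_bij (d2_bij 1 1 (oner_neq0 _) (oner_neq0 _)).
split=> //; apply/alltop_delta2P => a b a0 b0.
exact: bij_of_bij_compl (d2_bij a b a0 b0) bl.
Qed.

Lemma alltop_addr f : alltop_fun (f \o l) <-> alltop_fun f /\ bijective l.
Proof.
split=> [/alltop_delta2P Afl | [/alltop_delta2P Af bl]]; last first.
  apply/alltop_delta2P => a b a0 b0.
  rewrite -(bij_add_neq0 a bl) -(bij_add_neq0 b bl) in a0 b0.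
  apply: (eq_bij (bij_comp (Af _ _ a0 b0) bl)) => x.
  by rewrite delta2_addr.
have d2_bij a b : a != 0 -> b != 0 -> bijective (delta (delta f (l a)) (l b) \o l).
  by move=> a0 b0; apply: (eq_bij (Afl a b a0 b0)); apply: delta2_addr.
have bl : bijective l by apply: bij_compr_bij (d2_bij 1 1 (oner_neq0 _) (oner_neq0 _)).
split=> //; apply/alltop_delta2P => a b a0 b0; have [li lK liK] := bl.
have li_neq0 c : c != 0 -> li c != 0 by rewrite -(bij_add_neq0 _ bl) liK.
have := d2_bij _ _ (li_neq0 a a0) (li_neq0 b b0); rewrite !liK.
by move/bij_of_bij_compr; apply.
Qed.

End Alltop.

Lemma alltop_poly_comp (F : finFieldType) (p q : {poly F}) :
  alltop_poly (p \Po q) <-> alltop_fun ((fun x => p.[x]) \o (fun x => q.[x])).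
Proof. by apply: eq_alltop => x; rewrite horner_comp. Qed.

Theorem lemma4 (F : finFieldType) (L A : {poly F}) :
  additive_poly L ->
  [/\ (alltop_poly (A \Po L) <-> alltop_poly (L \Po A)),
      (alltop_poly (L \Po A) <-> (alltop_poly A /\ permutation_poly L)) &
      (alltop_poly (A \Po L) <-> (alltop_poly A /\ permutation_poly L))].
Proof.
move=> LD; have AL := alltop_poly_comp A L; have LA := alltop_poly_comp L A.
have alltop_LA := @alltop_addl F (fun x => L.[x]) LD (fun x => A.[x]).
have alltop_AL := @alltop_addr F (fun x => L.[x]) LD (fun x => A.[x]).
rewrite /permutation_poly; split; tauto.
Qed.
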